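(* In the calculus $\mathsf{CL}$: (1) the rule Mon$\forall$ (from $b\subseteq a,b\Vdash^\forall A,a\Vdash^\forall A,\Gamma\Rightarrow\Delta$ infer $b\subseteq a,a\Vdash^\forall A,\Gamma\Rightarrow\Delta$) is admissible; (2) the rule L$>$ and the rule L$>^\star$ (from $a\in N(x),x:A>B,\Gamma\Rightarrow\Delta,a\Vdash^\exists A$ and $a\Vdash^\exists A,x\Vdash_aA|B,a\in N(x),x:A>B,\Gamma\Rightarrow\Delta$ infer $a\in N(x),x:A>B,\Gamma\Rightarrow\Delta$) are equivalent, i.e. each is admissible in the calculus containing the other instead.
   Context: Syntax: world labels $x,y,\dots$; neighbourhood labels $a,b,\dots$. Relational atoms $a\in N(x)$, $x\in a$, $a\subseteq b$; labelled formulas: these, $x:A$, $a\Vdash^\exists A$, $a\Vdash^\forall A$, $x\Vdash_aA|B$, for $A,B\in\mathcal{L}::=p\mid\bot\mid A\wedge B\mid A\lor B\mid A\to B\mid A>B$. Sequents $\Gamma\Rightarrow\Delta$: multisets, relational atoms only on the left. Rules of $\mathsf{CL}$ (premisses / conclusion; ''fresh'' = not occurring in conclusion): initial sequents $x:p,\Gamma\Rightarrow\Delta,x:p$ ($p$ atomic), $x:\bot,\Gamma\Rightarrow\Delta$; G3 rules for $\wedge,\vee,\to$ on $x:A$; L$\forall$: $x:A,x\in a,a\Vdash^\forall A,\Gamma\Rightarrow\Delta$ / $x\in a,a\Vdash^\forall A,\Gamma\Rightarrow\Delta$; R$\forall$ (x fresh): $x\in a,\Gamma\Rightarrow\Delta,x:A$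 / $\Gamma\Rightarrow\Delta,a\Vdash^\forall A$; L$\exists$ (x fresh): $x\in a,x:A,\Gamma\Rightarrow\Delta$ / $a\Vdash^\exists A,\Gamma\Rightarrow\Delta$; R$\exists$: $x\in a,\Gamma\Rightarrow\Delta,x:A,a\Vdash^\exists A$ / $x\in a,\Gamma\Rightarrow\Delta,a\Vdash^\exists A$; R$>$ (a fresh): $a\in N(x),a\Vdash^\exists A,\Gamma\Rightarrow\Delta,x\Vdash_aA|B$ / $\Gamma\Rightarrow\Delta,x:A>B$; L$>$: $a\in N(x),x:A>B,\Gamma\Rightarrow\Delta,a\Vdash^\exists A$ and $x\Vdash_aA|B,a\in N(x),x:A>B,\Gamma\Rightarrow\Delta$ / $a\in N(x),x:A>B,\Gamma\Rightarrow\Delta$; R$|$: $c\in N(x),c\subseteq a,\Gamma\Rightarrow\Delta,x\Vdash_aA|B,c\Vdash^\exists A$ and $c\in N(x),c\subseteq a,\Gamma\Rightarrow\Delta,x\Vdash_aA|B,c\Vdash^\forall A\to B$ / $c\in N(x),c\subseteq a,\Gamma\Rightarrow\Delta,x\Vdash_aA|B$; L$|$ (c fresh): $c\in N(x),c\subseteq a,c\Vdash^\exists A,c\Vdash^\forall A\to B,\Gamma\Rightarrow\Delta$ / $x\Vdash_aA|B,\Gamma\Rightarrow\Delta$; Ref: $a\subseteq a,\Gamma\Rightarrow\Delta$ / $\Gamma\Rightarrow\Delta$; Tr: $c\subseteq a,c\subseteq b,b\subseteq a,\Gamma\Rightarrow\Delta$ / $c\subseteq b,b\subseteq a,\Gamma\Rightarrow\Delta$;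 L$\subseteq$: $x\in a,a\subseteq b,x\in b,\Gamma\Rightarrow\Delta$ / $x\in a,a\subseteq b,\Gamma\Rightarrow\Delta$. *)

From Stdlib Require Import List Permutation.
Import ListNotations.

Inductive form : Type :=
| Var : nat -> form
| Bot : form
| And : form -> form -> form
| Or  : form -> form -> form
| Imp : form -> form -> form
| Cnd : form -> form -> form.   (* A > B *)

Definition wlab := nat.
Definition nlab := nat.

Inductive ratom : Type :=
| RN  : nlab -> wlab -> ratom     (* a ∈ N(x) *)
| RIn : wlab -> nlab -> ratom     (* x ∈ a *)
| RSub : nlab -> nlab -> ratom.   (* a ⊆ b *)

Inductive lform : Type :=
| LW   : wlab -> form -> lform                    (* x : A *)
| LAll : nlab -> form -> lform                    (* a ⊩∀ A *)
| LEx  : nlab -> form -> lform                    (* a ⊩∃ A *)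
| LCnd : wlab -> nlab -> form -> form -> lform.   (* x ⊩_a A|B *)

(* A sequent  R, Γ ⇒ Δ  with R a multiset of relational atoms, Γ, Δ
   multisets of labelled formulas (multisets = lists up to permutation). *)

Definition ratom_w (r : ratom) : list wlab :=
  match r with RN _ x => [x] | RIn x _ => [x] | RSub _ _ => [] end.
Definition ratom_n (r : ratom) : list nlab :=
  match r with RN a _ => [a] | RIn _ a => [a] | RSub a b => [a; b] end.
Definition lform_w (f : lform) : list wlab :=
  match f with LW x _ => [x] | LCnd x _ _ _ => [x] | _ => [] end.
Definition lform_n (f : lform) : list nlab :=
  match f with LW _ _ => [] | LAll a _ => [a] | LEx a _ => [a]
          | LCnd _ a _ _ => [a] end.

Definition wfresh (x : wlab) (R : list ratom) (G D : list lform) : Prop :=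
  ~ In x (flat_map ratom_w R) /\ ~ In x (flat_map lform_w G)
  /\ ~ In x (flat_map lform_w D).
Definition nfresh (a : nlab) (R : list ratom) (G D : list lform) : Prop :=
  ~ In a (flat_map ratom_n R) /\ ~ In a (flat_map lform_n G)
  /\ ~ In a (flat_map lform_n D).

(* Derivability in CL.  If [star] is false, the left rule for > is L>;
   if [star] is true, it is replaced by L>*. *)
Inductive derivable (star : bool) : list ratom -> list lform -> list lform -> Prop :=
| d_perm : forall R R' G G' D D',
    derivable star R G D -> Permutation R R' -> Permutation G G' ->
    Permutation D D' -> derivable star R' G' D'
| d_init : forall x p R G D,
    derivable star R (LW x (Var p) :: G) (LW x (Var p) :: D)
| d_bot : forall x R G D, derivable star R (LW x Bot :: G) D
| d_Land : forall x A B R G D,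
    derivable star R (LW x A :: LW x B :: G) D ->
    derivable star R (LW x (And A B) :: G) D
| d_Rand : forall x A B R G D,
    derivable star R G (LW x A :: D) -> derivable star R G (LW x B :: D) ->
    derivable star R G (LW x (And A B) :: D)
| d_Lor : forall x A B R G D,
    derivable star R (LW x A :: G) D -> derivable star R (LW x B :: G) D ->
    derivable star R (LW x (Or A B) :: G) D
| d_Ror : forall x A B R G D,
    derivable star R G (LW x A :: LW x B :: D) ->
    derivable star R G (LW x (Or A B) :: D)
| d_Limp : forall x A B R G D,
    derivable star R G (LW x A :: D) -> derivable star R (LW x B :: G) D ->
    derivable star R (LW x (Imp A B) :: G) D
| d_Rimp : forall x A B R G D,
    derivable star R (LW x A :: G) (LW x B :: D) ->
    derivable star R G (LW x (Imp A B) :: D)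
| d_Lall : forall x a A R G D,
    derivable star (RIn x a :: R) (LW x A :: LAll a A :: G) D ->
    derivable star (RIn x a :: R) (LAll a A :: G) D
| d_Rall : forall x a A R G D,
    wfresh x R G (LAll a A :: D) ->
    derivable star (RIn x a :: R) G (LW x A :: D) ->
    derivable star R G (LAll a A :: D)
| d_Lex : forall x a A R G D,
    wfresh x R (LEx a A :: G) D ->
    derivable star (RIn x a :: R) (LW x A :: G) D ->
    derivable star R (LEx a A :: G) D
| d_Rex : forall x a A R G D,
    derivable star (RIn x a :: R) G (LW x A :: LEx a A :: D) ->
    derivable star (RIn x a :: R) G (LEx a A :: D)
| d_Rcnd : forall x a A B R G D,
    nfresh a R G (LW x (Cnd A B) :: D) ->
    derivable star (RN a x :: R) (LEx a A :: G) (LCnd x a A B :: D) ->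
    derivable star R G (LW x (Cnd A B) :: D)
| d_Lcnd : forall x a A B R G D,
    star = false ->
    derivable star (RN a x :: R) (LW x (Cnd A B) :: G) (LEx a A :: D) ->
    derivable star (RN a x :: R) (LCnd x a A B :: LW x (Cnd A B) :: G) D ->
    derivable star (RN a x :: R) (LW x (Cnd A B) :: G) D
| d_Lcnd_star : forall x a A B R G D,
    star = true ->
    derivable star (RN a x :: R) (LW x (Cnd A B) :: G) (LEx a A :: D) ->
    derivable star (RN a x :: R)
              (LEx a A :: LCnd x a A B :: LW x (Cnd A B) :: G) D ->
    derivable star (RN a x :: R) (LW x (Cnd A B) :: G) D
| d_Rbar : forall x a c A B R G D,
    derivable star (RN c x :: RSub c a :: R) G (LCnd x a A B :: LEx c A :: D) ->
    derivable star (RN c x :: RSub c a :: R) G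
              (LCnd x a A B :: LAll c (Imp A B) :: D) ->
    derivable star (RN c x :: RSub c a :: R) G (LCnd x a A B :: D)
| d_Lbar : forall x a c A B R G D,
    nfresh c R (LCnd x a A B :: G) D ->
    derivable star (RN c x :: RSub c a :: R) (LEx c A :: LAll c (Imp A B) :: G) D ->
    derivable star R (LCnd x a A B :: G) D
| d_Ref : forall a R G D,
    derivable star (RSub a a :: R) G D -> derivable star R G D
| d_Tr : forall a b c R G D,
    derivable star (RSub c a :: RSub c b :: RSub b a :: R) G D ->
    derivable star (RSub c b :: RSub b a :: R) G D
| d_Lsub : forall x a b R G D,
    derivable star (RIn x a :: RSub a b :: RIn x b :: R) G D ->
    derivable star (RIn x a :: RSub a b :: R) G D.

Definition CL := derivable false.
Definition CLstar := derivable true.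

From Stdlib Require Import List Permutation Arith Lia.
Import ListNotations.

(* Renaming labels preserves
   height; hence every rule is height-preserving invertible, and contraction is
   height-preserving admissible, by induction on the weight of the contracted formula and
   then on height.

   Mon∀: [b ⊩∀ A] can only be used by L∀ at some [x ∈ b]; given [b ⊆ a], the same instance
   [x : A] is obtained by L⊆ ([x ∈ a]) and L∀ on [a ⊩∀ A].
   L>* in CL: in the second premise, invert L| on [x ⊩_a A|B] with a fresh [c], giving
   [c ⊆ a] and [c ⊩∃ A]; invert both [a ⊩∃ A] and [c ⊩∃ A] at the same fresh [y] and
   contract the two copies of [y : A]. What remains is derivable from L|, L∃ on [c ⊩∃ A] and
   L⊆, which recovers [y ∈ a].
   L> in CL with L>*: weaken the second premise by [a ⊩∃ A]. *)

Section PermutationSolver.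
Context {T : Type}.
Implicit Types (x y : T) (t L M : list T).

Lemma perm_pull_cons x y t t' : Permutation t (x :: t') -> Permutation (y :: t) (x :: y :: t').
Proof. intros ->. apply perm_swap. Qed.
Lemma perm_pull_app x L t t' : Permutation t (x :: t') -> Permutation (L ++ t) (x :: L ++ t').
Proof. intros ->. symmetry. apply Permutation_middle. Qed.
Lemma perm_pull_list_nil L : Permutation L (L ++ []).
Proof. rewrite app_nil_r. reflexivity. Qed.
Lemma perm_pull_list_cons L y t t' : Permutation t (L ++ t') -> Permutation (y :: t) (L ++ y :: t').
Proof. intros ->. apply Permutation_middle. Qed.
Lemma perm_pull_list_app L M t t' : Permutation t (L ++ t') -> Permutation (M ++ t) (L ++ M ++ t').
Proof. intros ->. apply Permutation_app_swap_app. Qed.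

Lemma perm_match_cons x l1 l2 t' : Permutation l2 (x :: t') -> Permutation l1 t' -> Permutation (x :: l1) l2.
Proof. intros -> ->. reflexivity. Qed.
Lemma perm_match_app L l1 l2 t' : Permutation l2 (L ++ t') -> Permutation l1 t' -> Permutation (L ++ l1) l2.
Proof. intros -> ->. reflexivity. Qed.
Lemma perm_match_list L l2 t' : Permutation l2 (L ++ t') -> Permutation [] t' -> Permutation L l2.
Proof. intros -> <-. rewrite app_nil_r. reflexivity. Qed.
End PermutationSolver.

(* [perm_pull] moves the head item (or list variable) of the left-hand side to the front of the right-hand side. *)
Ltac perm_pull :=
  first [ apply Permutation_refl
        | apply perm_pull_list_nil
        | apply perm_pull_cons; perm_pull | apply perm_pull_app; perm_pull
        | apply perm_pull_list_cons; perm_pull | apply perm_pull_list_app; perm_pull ].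

Ltac perm_solve :=
  simpl; repeat rewrite <- app_assoc; simpl;
  let rec go :=
    match goal with
    | |- Permutation [] [] => apply Permutation_refl
    | |- Permutation (?x :: ?l1) ?l2 => eapply perm_match_cons; [ perm_pull | go ]
    | |- Permutation (?L ++ ?l1) ?l2 => eapply perm_match_app; [ perm_pull | go ]
    | |- Permutation ?L ?l2 => eapply perm_match_list; [ perm_pull | go ]
    end in go.

Lemma perm_split {T} (Gc G1 G : list T) f : Permutation (Gc ++ G1) (f :: G) ->
  (exists G1', Permutation G1 (f :: G1') /\ Permutation G (Gc ++ G1')) \/
  (exists Gc', Permutation Gc (f :: Gc') /\ Permutation G (Gc' ++ G1)).
Proof.
  intros HP. assert (Hin : In f (Gc ++ G1)) by (rewrite HP; left; auto).
  apply in_app_or in Hin as [Hin|Hin]; apply in_split in Hin as (l1 & l2 & ->).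
  - right. exists (l1 ++ l2). split; [perm_solve|].
    apply Permutation_cons_inv with f. rewrite <- HP. perm_solve.
  - left. exists (l1 ++ l2). split; [perm_solve|].
    apply Permutation_cons_inv with f. rewrite <- HP. perm_solve.
Qed.


(** * Height-bounded derivations *)

Definition premise : Type := (list ratom * list lform * list lform)%type.
Definition pR (p : premise) : list ratom := fst (fst p).
Definition pG (p : premise) : list lform := snd (fst p).
Definition pD (p : premise) : list lform := snd p.

Inductive eigen : Type := NoEigen | EigenW (x : wlab) | EigenN (a : nlab).

Definition wlabels (R : list ratom) (G D : list lform) : list wlab :=
  flat_map ratom_w R ++ flat_map lform_w G ++ flat_map lform_w D.
Definition nlabels (R : list ratom) (G D : list lform) : list nlab :=
  flat_map ratom_n R ++ flat_map lform_n G ++ flat_map lform_n D.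

Definition eigen_fresh (e : eigen) (R : list ratom) (G D : list lform) : Prop :=
  match e with
  | NoEigen => True
  | EigenW x => ~ In x (wlabels R G D)
  | EigenN a => ~ In a (nlabels R G D)
  end.

(* The rules of [derivable] with their contexts stripped: from the premises
   [pR p ++ R, pG p ++ G => pD p ++ D] (p in ps) infer [Rc ++ R, Gc ++ G => Dc ++ D],
   the eigenvariable [e] being fresh for the conclusion. *)
Inductive rule (s : bool) : list ratom -> list lform -> list lform -> list premise -> eigen -> Prop :=
| r_init : forall x p, rule s [] [LW x (Var p)] [LW x (Var p)] [] NoEigen
| r_bot : forall x, rule s [] [LW x Bot] [] [] NoEigen
| r_Land : forall x A B, rule s [] [LW x (And A B)] [] [([], [LW x A; LW x B], [])] NoEigen
| r_Rand : forall x A B,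
    rule s [] [] [LW x (And A B)] [([], [], [LW x A]); ([], [], [LW x B])] NoEigen
| r_Lor : forall x A B,
    rule s [] [LW x (Or A B)] [] [([], [LW x A], []); ([], [LW x B], [])] NoEigen
| r_Ror : forall x A B, rule s [] [] [LW x (Or A B)] [([], [], [LW x A; LW x B])] NoEigen
| r_Limp : forall x A B,
    rule s [] [LW x (Imp A B)] [] [([], [], [LW x A]); ([], [LW x B], [])] NoEigen
| r_Rimp : forall x A B, rule s [] [] [LW x (Imp A B)] [([], [LW x A], [LW x B])] NoEigen
| r_Lall : forall x a A,
    rule s [RIn x a] [LAll a A] [] [([RIn x a], [LW x A; LAll a A], [])] NoEigen
| r_Rall : forall x a A, rule s [] [] [LAll a A] [([RIn x a], [], [LW x A])] (EigenW x)
| r_Lex : forall x a A, rule s [] [LEx a A] [] [([RIn x a], [LW x A], [])] (EigenW x)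
| r_Rex : forall x a A,
    rule s [RIn x a] [] [LEx a A] [([RIn x a], [], [LW x A; LEx a A])] NoEigen
| r_Rcnd : forall x a A B,
    rule s [] [] [LW x (Cnd A B)] [([RN a x], [LEx a A], [LCnd x a A B])] (EigenN a)
| r_Lcnd : forall x a A B, s = false ->
    rule s [RN a x] [LW x (Cnd A B)] []
      [([RN a x], [LW x (Cnd A B)], [LEx a A]);
       ([RN a x], [LCnd x a A B; LW x (Cnd A B)], [])] NoEigen
| r_Lcnd_star : forall x a A B, s = true ->
    rule s [RN a x] [LW x (Cnd A B)] []
      [([RN a x], [LW x (Cnd A B)], [LEx a A]);
       ([RN a x], [LEx a A; LCnd x a A B; LW x (Cnd A B)], [])] NoEigen
| r_Rbar : forall x a c A B,
    rule s [RN c x; RSub c a] [] [LCnd x a A B]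
      [([RN c x; RSub c a], [], [LCnd x a A B; LEx c A]);
       ([RN c x; RSub c a], [], [LCnd x a A B; LAll c (Imp A B)])] NoEigen
| r_Lbar : forall x a c A B,
    rule s [] [LCnd x a A B] []
      [([RN c x; RSub c a], [LEx c A; LAll c (Imp A B)], [])] (EigenN c)
| r_Ref : forall a, rule s [] [] [] [([RSub a a], [], [])] NoEigen
| r_Tr : forall a b c,
    rule s [RSub c b; RSub b a] [] [] [([RSub c a; RSub c b; RSub b a], [], [])] NoEigen
| r_Lsub : forall x a b,
    rule s [RIn x a; RSub a b] [] [] [([RIn x a; RSub a b; RIn x b], [], [])] NoEigen.

Inductive hderiv (s : bool) : nat -> list ratom -> list lform -> list lform -> Prop :=
| hd_perm : forall n R R' G G' D D', hderiv s n R G D ->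
    Permutation R R' -> Permutation G G' -> Permutation D D' -> hderiv s n R' G' D'
| hd_rule : forall n Rc Gc Dc ps e R G D, rule s Rc Gc Dc ps e ->
    eigen_fresh e (Rc ++ R) (Gc ++ G) (Dc ++ D) ->
    (forall p, In p ps -> hderiv s n (pR p ++ R) (pG p ++ G) (pD p ++ D)) ->
    hderiv s (S n) (Rc ++ R) (Gc ++ G) (Dc ++ D).

Lemma hderiv_rule_perm s n Rc Gc Dc ps e R G D R' G' D' : rule s Rc Gc Dc ps e ->
  eigen_fresh e (Rc ++ R) (Gc ++ G) (Dc ++ D) ->
  (forall p, In p ps -> hderiv s n (pR p ++ R) (pG p ++ G) (pD p ++ D)) ->
  Permutation (Rc ++ R) R' -> Permutation (Gc ++ G) G' -> Permutation (Dc ++ D) D' ->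
  hderiv s (S n) R' G' D'.
Proof. intros. eapply hd_perm; [eapply hd_rule|..]; eauto. Qed.

Lemma hderiv_mono s n R G D : hderiv s n R G D -> forall m, n <= m -> hderiv s m R G D.
Proof.
  induction 1; intros m Hm.
  - eapply hd_perm; eauto.
  - destruct m as [|m]; [lia|]. eapply hd_rule; eauto. intros p Hp. apply H2; auto; lia.
Qed.

Lemma hderiv_last_rule s n R G D : hderiv s n R G D ->
  exists m Rc Gc Dc ps e R1 G1 D1,
    n = S m /\ rule s Rc Gc Dc ps e /\ eigen_fresh e (Rc ++ R1) (Gc ++ G1) (Dc ++ D1) /\
    (forall p, In p ps -> hderiv s m (pR p ++ R1) (pG p ++ G1) (pD p ++ D1)) /\
    Permutation (Rc ++ R1) R /\ Permutation (Gc ++ G1) G /\ Permutation (Dc ++ D1) D.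
Proof.
  induction 1.
  - destruct IHhderiv as (m & Rc & Gc & Dc & ps & e & R1 & G1 & D1 & -> & Hr & Hf & Hps & PR & PG & PD).
    exists m, Rc, Gc, Dc, ps, e, R1, G1, D1.
    repeat split; auto; eapply perm_trans; eauto.
  - exists n, Rc, Gc, Dc, ps, e, R, G, D. repeat split; auto.
Qed.

Lemma wfresh_iff x R G D : wfresh x R G D <-> ~ In x (wlabels R G D).
Proof. unfold wfresh, wlabels. rewrite !in_app_iff. tauto. Qed.
Lemma nfresh_iff a R G D : nfresh a R G D <-> ~ In a (nlabels R G D).
Proof. unfold nfresh, nlabels. rewrite !in_app_iff. tauto. Qed.

Ltac apply_rule r R G D :=
  eapply (hderiv_rule_perm _ _ _ _ _ _ _ R G D);
  [ eapply r; eauto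
  | cbn [eigen_fresh app];
    first [ exact I | apply (proj1 (wfresh_iff _ _ _ _)); eassumption
          | apply (proj1 (nfresh_iff _ _ _ _)); eassumption ]
  | | perm_solve | perm_solve | perm_solve ].
Ltac close_premises :=
  let p := fresh "p" in intros p Hp; simpl in Hp;
  repeat (destruct Hp as [<-|Hp]); [..| contradiction]; unfold pR, pG, pD; simpl;
  first [eassumption | eapply hderiv_mono; [eassumption | lia]].

Lemma derivable_hderiv s R G D : derivable s R G D -> exists n, hderiv s n R G D.
Proof.
  induction 1; repeat match goal with H : exists _, _ |- _ => destruct H end.
  - eexists; eapply hd_perm; eauto.
  - exists 1. apply_rule r_init R G D. close_premises.
  - exists 1. apply_rule r_bot R G D. close_premises.
  - eexists. apply_rule r_Land R G D. close_premises.
  - exists (S (max x0 x1)). apply_rule r_Rand R G D. close_premises.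
  - exists (S (max x0 x1)). apply_rule r_Lor R G D. close_premises.
  - eexists. apply_rule r_Ror R G D. close_premises.
  - exists (S (max x0 x1)). apply_rule r_Limp R G D. close_premises.
  - eexists. apply_rule r_Rimp R G D. close_premises.
  - eexists. apply_rule r_Lall R G D. close_premises.
  - eexists. apply_rule r_Rall R G D. close_premises.
  - eexists. apply_rule r_Lex R G D. close_premises.
  - eexists. apply_rule r_Rex R G D. close_premises.
  - eexists. apply_rule r_Rcnd R G D. close_premises.
  - exists (S (max x0 x1)). apply_rule r_Lcnd R G D. close_premises.
  - exists (S (max x0 x1)). apply_rule r_Lcnd_star R G D. close_premises.
  - exists (S (max x0 x1)). apply_rule r_Rbar R G D. close_premises.
  - eexists. apply_rule r_Lbar R G D. close_premises.
  - eexists. apply_rule r_Ref R G D. close_premises.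
  - eexists. apply_rule r_Tr R G D. close_premises.
  - eexists. apply_rule r_Lsub R G D. close_premises.
Qed.

Lemma hderiv_derivable s n R G D : hderiv s n R G D -> derivable s R G D.
Proof.
  induction 1 as [| n Rc Gc Dc ps e R G D Hr Hf _ IH].
  - eapply d_perm; eauto.
  - destruct Hr; simpl in *;
      try specialize (IH _ (or_introl eq_refl)) as IH1;
      try specialize (IH _ (or_intror (or_introl eq_refl))) as IH2; simpl in *.
    all: try (econstructor; solve [eauto | apply wfresh_iff; auto | apply nfresh_iff; auto]).
    + eapply d_Rall; [apply wfresh_iff; exact Hf | exact IH1].
    + eapply d_Lex; [apply wfresh_iff; exact Hf | exact IH1].
    + eapply d_Rcnd; [apply nfresh_iff; exact Hf | exact IH1].
    + eapply d_Lbar; [apply nfresh_iff; exact Hf | exact IH1].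
Qed.

(** * Renaming labels *)

Definition ren_ratom (fw fn : nat -> nat) (r : ratom) : ratom :=
  match r with
  | RN a x => RN (fn a) (fw x)
  | RIn x a => RIn (fw x) (fn a)
  | RSub a b => RSub (fn a) (fn b)
  end.
Definition ren_lform (fw fn : nat -> nat) (f : lform) : lform :=
  match f with
  | LW x A => LW (fw x) A
  | LAll a A => LAll (fn a) A
  | LEx a A => LEx (fn a) A
  | LCnd x a A B => LCnd (fw x) (fn a) A B
  end.
Definition ren_premise (fw fn : nat -> nat) (p : premise) : premise :=
  (map (ren_ratom fw fn) (pR p), map (ren_lform fw fn) (pG p), map (ren_lform fw fn) (pD p)).
Definition ren_eigen (fw fn : nat -> nat) (e : eigen) : eigen :=
  match e with NoEigen => NoEigen | EigenW x => EigenW (fw x) | EigenN a => EigenN (fn a) end.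

Definition update (f : nat -> nat) (x y : nat) : nat -> nat :=
  fun z => if Nat.eqb z x then y else f z.

Lemma update_eq f x y : update f x y x = y.
Proof. unfold update. rewrite Nat.eqb_refl. reflexivity. Qed.
Lemma update_neq f x y z : z <> x -> update f x y z = f z.
Proof. unfold update. intros H. apply Nat.eqb_neq in H. rewrite H. reflexivity. Qed.

Lemma rule_ren s fw fn Rc Gc Dc ps e : rule s Rc Gc Dc ps e ->
  rule s (map (ren_ratom fw fn) Rc) (map (ren_lform fw fn) Gc) (map (ren_lform fw fn) Dc)
    (map (ren_premise fw fn) ps) (ren_eigen fw fn e).
Proof.
  destruct 1; unfold ren_premise, pR, pG, pD; simpl.
  all: first [ apply r_Lcnd; assumption | apply r_Lcnd_star; assumption | constructor ].
Qed.

Lemma ren_ratoms_agree fw fn fw' fn' R :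
  (forall y, In y (flat_map ratom_w R) -> fw y = fw' y) ->
  (forall a, In a (flat_map ratom_n R) -> fn a = fn' a) ->
  map (ren_ratom fw fn) R = map (ren_ratom fw' fn') R.
Proof.
  induction R as [|r R IH]; intros Hw Hn; simpl; [reflexivity|]. f_equal.
  - destruct r; simpl in *; f_equal; first [apply Hw | apply Hn]; simpl; auto.
  - apply IH; intros; [apply Hw | apply Hn]; simpl; rewrite in_app_iff; auto.
Qed.
Lemma ren_lforms_agree fw fn fw' fn' G :
  (forall y, In y (flat_map lform_w G) -> fw y = fw' y) ->
  (forall a, In a (flat_map lform_n G) -> fn a = fn' a) ->
  map (ren_lform fw fn) G = map (ren_lform fw' fn') G.
Proof.
  induction G as [|f G IH]; intros Hw Hn; simpl; [reflexivity|]. f_equal.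
  - destruct f; simpl in *; f_equal; first [apply Hw | apply Hn]; simpl; auto.
  - apply IH; intros; [apply Hw | apply Hn]; simpl; rewrite in_app_iff; auto.
Qed.

Definition same_ren (fw fn fw' fn' : nat -> nat) (R : list ratom) (G D : list lform) : Prop :=
  map (ren_ratom fw fn) R = map (ren_ratom fw' fn') R /\
  map (ren_lform fw fn) G = map (ren_lform fw' fn') G /\
  map (ren_lform fw fn) D = map (ren_lform fw' fn') D.

Lemma same_ren_agree fw fn fw' fn' R G D :
  (forall y, In y (wlabels R G D) -> fw y = fw' y) ->
  (forall a, In a (nlabels R G D) -> fn a = fn' a) ->
  same_ren fw fn fw' fn' R G D.
Proof.
  unfold wlabels, nlabels; intros Hw Hn; repeat split;
    first [apply ren_ratoms_agree | apply ren_lforms_agree]; intros;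
    first [apply Hw | apply Hn]; rewrite !in_app_iff; auto.
Qed.

Lemma same_ren_update_w fw fn x x' R G D : ~ In x (wlabels R G D) ->
  same_ren (update fw x x') fn fw fn R G D.
Proof.
  intros Hx. apply same_ren_agree; [|reflexivity].
  intros y Hy. apply update_neq. intros ->. contradiction.
Qed.
Lemma same_ren_update_n fw fn a a' R G D : ~ In a (nlabels R G D) ->
  same_ren fw (update fn a a') fw fn R G D.
Proof.
  intros Ha. apply same_ren_agree; [reflexivity|].
  intros b Hb. apply update_neq. intros ->. contradiction.
Qed.

Lemma ren_ratoms_id R : map (ren_ratom id id) R = R.
Proof. induction R as [|[] R IH]; simpl; rewrite ?IH; reflexivity. Qed.
Lemma ren_lforms_id G : map (ren_lform id id) G = G.
Proof. induction G as [|[] G IH]; simpl; rewrite ?IH; reflexivity. Qed.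

Lemma fresh_nat (l : list nat) : exists x, ~ In x l.
Proof.
  exists (S (list_max l)). intros Hin.
  pose proof (proj1 (list_max_le l (list_max l)) (le_n _)) as Hle.
  rewrite Forall_forall in Hle. apply Hle in Hin. lia.
Qed.

Lemma wlabels_app R1 R2 G1 G2 D1 D2 y :
  In y (wlabels (R1 ++ R2) (G1 ++ G2) (D1 ++ D2)) <-> In y (wlabels R1 G1 D1) \/ In y (wlabels R2 G2 D2).
Proof. unfold wlabels. rewrite !flat_map_app, !in_app_iff. tauto. Qed.
Lemma nlabels_app R1 R2 G1 G2 D1 D2 a :
  In a (nlabels (R1 ++ R2) (G1 ++ G2) (D1 ++ D2)) <-> In a (nlabels R1 G1 D1) \/ In a (nlabels R2 G2 D2).
Proof. unfold nlabels. rewrite !flat_map_app, !in_app_iff. tauto. Qed.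

Lemma hderiv_ren s n : forall R G D, hderiv s n R G D -> forall fw fn,
  hderiv s n (map (ren_ratom fw fn) R) (map (ren_lform fw fn) G) (map (ren_lform fw fn) D).
Proof.
  induction n as [|n IH]; intros R G D H fw fn;
    destruct (hderiv_last_rule _ _ _ _ _ H)
      as (m & Rc & Gc & Dc & ps & e & R1 & G1 & D1 & Hm & Hr & Hf & Hps & PR & PG & PD);
    [discriminate|]. injection Hm as ->.
  (* the premises are renamed by maps that differ from [fw], [fn] only on the eigenvariable *)
  assert (Hstep : forall fw' fn', same_ren fw' fn' fw fn Rc Gc Dc -> same_ren fw' fn' fw fn R1 G1 D1 ->
     eigen_fresh (ren_eigen fw' fn' e) (map (ren_ratom fw fn) (Rc ++ R1))
       (map (ren_lform fw fn) (Gc ++ G1)) (map (ren_lform fw fn) (Dc ++ D1)) ->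
     hderiv s (S m) (map (ren_ratom fw fn) R) (map (ren_lform fw fn) G) (map (ren_lform fw fn) D)).
  { intros fw' fn' (ER1 & EG1 & ED1) (ER2 & EG2 & ED2) Hf'. rewrite !map_app in Hf'.
    apply (hderiv_rule_perm s m (map (ren_ratom fw fn) Rc) (map (ren_lform fw fn) Gc)
             (map (ren_lform fw fn) Dc) (map (ren_premise fw' fn') ps) (ren_eigen fw' fn' e)
             (map (ren_ratom fw fn) R1) (map (ren_lform fw fn) G1) (map (ren_lform fw fn) D1)).
    - rewrite <- ER1, <- EG1, <- ED1. apply rule_ren. exact Hr.
    - exact Hf'.
    - intros p' Hp'. apply in_map_iff in Hp' as (p & <- & Hp).
      specialize (IH _ _ _ (Hps p Hp) fw' fn').
      unfold ren_premise, pR, pG, pD in *; simpl. rewrite !map_app, ER2, EG2, ED2 in IH. exact IH.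
    - rewrite <- map_app. apply Permutation_map. exact PR.
    - rewrite <- map_app. apply Permutation_map. exact PG.
    - rewrite <- map_app. apply Permutation_map. exact PD. }
  destruct e as [|x|a]; simpl in Hf.
  - apply (Hstep fw fn); repeat split; exact I.
  - destruct (fresh_nat (wlabels (map (ren_ratom fw fn) (Rc ++ R1)) (map (ren_lform fw fn) (Gc ++ G1))
                                 (map (ren_lform fw fn) (Dc ++ D1)))) as [x' Hx'].
    rewrite wlabels_app in Hf.
    apply (Hstep (update fw x x') fn); [apply same_ren_update_w; tauto..|].
    simpl. rewrite update_eq. exact Hx'.
  - destruct (fresh_nat (nlabels (map (ren_ratom fw fn) (Rc ++ R1)) (map (ren_lform fw fn) (Gc ++ G1))
                                 (map (ren_lform fw fn) (Dc ++ D1)))) as [a' Ha'].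
    rewrite nlabels_app in Hf.
    apply (Hstep fw (update fn a a')); [apply same_ren_update_n; tauto..|].
    simpl. rewrite update_eq. exact Ha'.
Qed.

Definition ren_w (y z : wlab) : nat -> nat := update id y z.
Definition ren_n (b c : nlab) : nat -> nat := update id b c.

Lemma ren_w_eq y z : ren_w y z y = z.
Proof. apply update_eq. Qed.
Lemma ren_n_eq b c : ren_n b c b = c.
Proof. apply update_eq. Qed.
Lemma ren_n_neq b c a : a <> b -> ren_n b c a = a.
Proof. apply update_neq. Qed.

Lemma ren_w_unused y z R G D : ~ In y (wlabels R G D) ->
  map (ren_ratom (ren_w y z) id) R = R /\
  map (ren_lform (ren_w y z) id) G = G /\
  map (ren_lform (ren_w y z) id) D = D.
Proof.
  intros Hy. destruct (same_ren_update_w id id y z R G D Hy) as (E1 & E2 & E3).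
  unfold ren_w. rewrite E1, E2, E3, ren_ratoms_id, !ren_lforms_id. auto.
Qed.
Lemma ren_n_unused b c R G D : ~ In b (nlabels R G D) ->
  map (ren_ratom id (ren_n b c)) R = R /\
  map (ren_lform id (ren_n b c)) G = G /\
  map (ren_lform id (ren_n b c)) D = D.
Proof.
  intros Hb. destruct (same_ren_update_n id id b c R G D Hb) as (E1 & E2 & E3).
  unfold ren_n. rewrite E1, E2, E3, ren_ratoms_id, !ren_lforms_id. auto.
Qed.

Lemma hderiv_ren_w s n Ra Ga Da R G D y z :
  hderiv s n (Ra ++ R) (Ga ++ G) (Da ++ D) -> ~ In y (wlabels R G D) ->
  hderiv s n (map (ren_ratom (ren_w y z) id) Ra ++ R)
    (map (ren_lform (ren_w y z) id) Ga ++ G) (map (ren_lform (ren_w y z) id) Da ++ D).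
Proof.
  intros H Hy. destruct (ren_w_unused y z R G D Hy) as (E1 & E2 & E3).
  pose proof (hderiv_ren _ _ _ _ _ H (ren_w y z) id) as H'.
  rewrite !map_app, E1, E2, E3 in H'. exact H'.
Qed.
Lemma hderiv_ren_n s n Ra Ga Da R G D b c :
  hderiv s n (Ra ++ R) (Ga ++ G) (Da ++ D) -> ~ In b (nlabels R G D) ->
  hderiv s n (map (ren_ratom id (ren_n b c)) Ra ++ R)
    (map (ren_lform id (ren_n b c)) Ga ++ G) (map (ren_lform id (ren_n b c)) Da ++ D).
Proof.
  intros H Hb. destruct (ren_n_unused b c R G D Hb) as (E1 & E2 & E3).
  pose proof (hderiv_ren _ _ _ _ _ H id (ren_n b c)) as H'.
  rewrite !map_app, E1, E2, E3 in H'. exact H'.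
Qed.

Definition eigen_avoid (e : eigen) (AW : list wlab) (AN : list nlab) : Prop :=
  match e with NoEigen => True | EigenW x => ~ In x AW | EigenN a => ~ In a AN end.

Lemma rule_rename_eigen s m Rc Gc Dc ps e R1 G1 D1 AW AN :
  rule s Rc Gc Dc ps e -> eigen_fresh e (Rc ++ R1) (Gc ++ G1) (Dc ++ D1) ->
  (forall p, In p ps -> hderiv s m (pR p ++ R1) (pG p ++ G1) (pD p ++ D1)) ->
  exists ps' e', rule s Rc Gc Dc ps' e' /\ eigen_fresh e' (Rc ++ R1) (Gc ++ G1) (Dc ++ D1) /\
    eigen_avoid e' AW AN /\ (forall p, In p ps' -> hderiv s m (pR p ++ R1) (pG p ++ G1) (pD p ++ D1)).
Proof.
  intros Hr Hf Hps. destruct e as [|x|a]; simpl in Hf.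
  - exists ps, NoEigen. repeat split; auto.
  - destruct (fresh_nat (AW ++ wlabels (Rc ++ R1) (Gc ++ G1) (Dc ++ D1))) as [x' Hx'].
    rewrite in_app_iff in Hx'. rewrite wlabels_app in Hf.
    destruct (ren_w_unused x x' Rc Gc Dc) as (E1 & E2 & E3); [tauto|].
    exists (map (ren_premise (ren_w x x') id) ps), (EigenW x'). repeat split.
    + pose proof (rule_ren s (ren_w x x') id _ _ _ _ _ Hr) as H.
      simpl in H. rewrite ren_w_eq, E1, E2, E3 in H. exact H.
    + simpl. tauto.
    + simpl. tauto.
    + intros p' Hp'. apply in_map_iff in Hp' as (p & <- & Hp).
      unfold ren_premise, pR, pG, pD; simpl. apply hderiv_ren_w; [exact (Hps p Hp) | tauto].
  - destruct (fresh_nat (AN ++ nlabels (Rc ++ R1) (Gc ++ G1) (Dc ++ D1))) as [a' Ha'].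
    rewrite in_app_iff in Ha'. rewrite nlabels_app in Hf.
    destruct (ren_n_unused a a' Rc Gc Dc) as (E1 & E2 & E3); [tauto|].
    exists (map (ren_premise id (ren_n a a')) ps), (EigenN a'). repeat split.
    + pose proof (rule_ren s id (ren_n a a') _ _ _ _ _ Hr) as H.
      simpl in H. rewrite ren_n_eq, E1, E2, E3 in H. exact H.
    + simpl. tauto.
    + simpl. tauto.
    + intros p' Hp'. apply in_map_iff in Hp' as (p & <- & Hp).
      unfold ren_premise, pR, pG, pD; simpl. apply hderiv_ren_n; [exact (Hps p Hp) | tauto].
Qed.

Lemma flat_map_incl {T U} (g : T -> list U) l l' : incl l l' -> incl (flat_map g l) (flat_map g l').
Proof. intros H y Hy. apply in_flat_map in Hy as (z & Hz & Hy). apply in_flat_map. eauto. Qed.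

Lemma wlabels_incl R G D R' G' D' y : incl R R' -> incl G G' -> incl D D' ->
  In y (wlabels R G D) -> In y (wlabels R' G' D').
Proof.
  unfold wlabels. intros H1 H2 H3. rewrite !in_app_iff.
  intros [H|[H|H]]; [left|right; left|right; right]; eapply flat_map_incl; eauto.
Qed.
Lemma nlabels_incl R G D R' G' D' a : incl R R' -> incl G G' -> incl D D' ->
  In a (nlabels R G D) -> In a (nlabels R' G' D').
Proof.
  unfold nlabels. intros H1 H2 H3. rewrite !in_app_iff.
  intros [H|[H|H]]; [left|right; left|right; right]; eapply flat_map_incl; eauto.
Qed.

Lemma eigen_fresh_incl e R G D R' G' D' : incl R R' -> incl G G' -> incl D D' ->
  eigen_fresh e R' G' D' -> eigen_fresh e R G D.
Proof.
  intros H1 H2 H3. destruct e; simpl; auto; intros Hf Hin; apply Hf;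
    [eapply wlabels_incl | eapply nlabels_incl]; eauto.
Qed.

Lemma eigen_fresh_extend e R G D Ra Ga Da AW AN :
  eigen_fresh e R G D -> eigen_avoid e AW AN ->
  (forall y, In y (wlabels Ra Ga Da) -> In y (wlabels R G D) \/ In y AW) ->
  (forall a, In a (nlabels Ra Ga Da) -> In a (nlabels R G D) \/ In a AN) ->
  eigen_fresh e (Ra ++ R) (Ga ++ G) (Da ++ D).
Proof.
  intros Hf Hav Hw Hn. destruct e as [|x|a]; simpl in *; auto.
  - rewrite wlabels_app. intros [Hin|Hin]; [apply Hw in Hin as [Hin|Hin]|]; tauto.
  - rewrite nlabels_app. intros [Hin|Hin]; [apply Hn in Hin as [Hin|Hin]|]; tauto.
Qed.

Lemma wlabels_ant f R G D y : In f G -> In y (lform_w f) -> In y (wlabels R G D).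
Proof. intros H1 H2. unfold wlabels. rewrite !in_app_iff. right; left. apply in_flat_map; eauto. Qed.
Lemma wlabels_suc f R G D y : In f D -> In y (lform_w f) -> In y (wlabels R G D).
Proof. intros H1 H2. unfold wlabels. rewrite !in_app_iff. right; right. apply in_flat_map; eauto. Qed.
Lemma nlabels_ant f R G D a : In f G -> In a (lform_n f) -> In a (nlabels R G D).
Proof. intros H1 H2. unfold nlabels. rewrite !in_app_iff. right; left. apply in_flat_map; eauto. Qed.
Lemma nlabels_suc f R G D a : In f D -> In a (lform_n f) -> In a (nlabels R G D).
Proof. intros H1 H2. unfold nlabels. rewrite !in_app_iff. right; right. apply in_flat_map; eauto. Qed.

Ltac incl_solve := unfold incl; intros; simpl in *; rewrite ?in_app_iff in *; simpl in *; tauto.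
Ltac perm_in_goal :=
  repeat match goal with P : Permutation ?X _ |- context [?X] => is_var X; rewrite P end.
Ltac fresh_incl Hf :=
  revert Hf; apply eigen_fresh_incl; unfold incl; intros ?z; perm_in_goal; incl_solve.

Lemma perm_single {T} (Gc : list T) f Gc' : length Gc <= 1 -> Permutation Gc (f :: Gc') -> Gc = [f] /\ Gc' = [].
Proof.
  intros Hl HP. destruct Gc as [|g [|g' Gc]]; simpl in Hl; try lia.
  - apply Permutation_nil in HP; discriminate.
  - apply Permutation_length_1_inv in HP. injection HP as -> ->. auto.
Qed.

Lemma rule_length s Rc Gc Dc ps e : rule s Rc Gc Dc ps e ->
  length Rc <= 2 /\ length Gc <= 1 /\ length Dc <= 1.
Proof. destruct 1; simpl; lia. Qed.

(** * Height-preserving invertibility *)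

(* If [f] can be replaced by [Ra, Ga => Da] whenever it is principal, it can be replaced
   everywhere; the labels introduced are those of [f] or eigenvariables in [AW], [AN]. *)
Lemma hderiv_inv_left s f Ra Ga Da AW AN
  (Hw : forall y, In y (wlabels Ra Ga Da) -> In y (lform_w f) \/ In y AW)
  (Hn : forall a, In a (nlabels Ra Ga Da) -> In a (lform_n f) \/ In a AN)
  (Hp : forall m Rc Dc ps e R1 G1 D1, rule s Rc [f] Dc ps e ->
     eigen_fresh e (Rc ++ R1) (f :: G1) (Dc ++ D1) ->
     (forall p, In p ps -> hderiv s m (pR p ++ R1) (pG p ++ G1) (pD p ++ D1)) ->
     hderiv s (S m) (Ra ++ Rc ++ R1) (Ga ++ G1) (Da ++ Dc ++ D1)) :
  forall n R G D, hderiv s n R (f :: G) D -> hderiv s n (Ra ++ R) (Ga ++ G) (Da ++ D).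
Proof.
  induction n as [|n IH]; intros R G D H;
    destruct (hderiv_last_rule _ _ _ _ _ H)
      as (m & Rc & Gc & Dc & ps & e & R1 & G1 & D1 & Hm & Hr & Hf & Hps & PR & PG & PD);
    [discriminate|]. injection Hm as ->.
  destruct (perm_split _ _ _ _ PG) as [(G1' & P1 & P2) | (Gc' & P1 & P2)].
  - destruct (rule_rename_eigen _ _ _ _ _ _ _ R1 G1 D1 AW AN Hr Hf Hps)
      as (ps' & e' & Hr' & Hf' & Hav & Hps').
    apply (hderiv_rule_perm s m Rc Gc Dc ps' e' (Ra ++ R1) (Ga ++ G1') (Da ++ D1)); [exact Hr'| | |..].
    + assert (Hfe : eigen_fresh e' (Ra ++ Rc ++ R1) (Ga ++ Gc ++ G1) (Da ++ Dc ++ D1)).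
      { apply (eigen_fresh_extend _ _ _ _ _ _ _ AW AN Hf' Hav).
        - intros y Hy. apply Hw in Hy as [Hy|Hy]; [left|right; exact Hy].
          eapply wlabels_ant; [|exact Hy]. apply in_or_app. right. rewrite P1. left; auto.
        - intros a Ha. apply Hn in Ha as [Ha|Ha]; [left|right; exact Ha].
          eapply nlabels_ant; [|exact Ha]. apply in_or_app. right. rewrite P1. left; auto. }
      fresh_incl Hfe.
    + intros p Hp0. eapply hd_perm;
        [apply (IH (pR p ++ R1) (pG p ++ G1') (pD p ++ D1));
         eapply hd_perm; [exact (Hps' p Hp0) | reflexivity | rewrite P1; perm_solve | reflexivity]
        | perm_solve | perm_solve | perm_solve].
    + rewrite <- PR; perm_solve.
    + rewrite P2; perm_solve.
    + rewrite <- PD; perm_solve.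
  - destruct (rule_length _ _ _ _ _ _ Hr) as (_ & HGc & _).
    destruct (perm_single _ _ _ HGc P1) as [-> ->].
    eapply hd_perm; [apply (Hp m Rc Dc ps e R1 G1 D1 Hr Hf Hps) | rewrite <- PR; perm_solve
                        | rewrite P2; perm_solve | rewrite <- PD; perm_solve].
Qed.

Lemma hderiv_inv_right s f Ra Ga Da AW AN
  (Hw : forall y, In y (wlabels Ra Ga Da) -> In y (lform_w f) \/ In y AW)
  (Hn : forall a, In a (nlabels Ra Ga Da) -> In a (lform_n f) \/ In a AN)
  (Hp : forall m Rc Gc ps e R1 G1 D1, rule s Rc Gc [f] ps e ->
     eigen_fresh e (Rc ++ R1) (Gc ++ G1) (f :: D1) ->
     (forall p, In p ps -> hderiv s m (pR p ++ R1) (pG p ++ G1) (pD p ++ D1)) ->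
     hderiv s (S m) (Ra ++ Rc ++ R1) (Ga ++ Gc ++ G1) (Da ++ D1)) :
  forall n R G D, hderiv s n R G (f :: D) -> hderiv s n (Ra ++ R) (Ga ++ G) (Da ++ D).
Proof.
  induction n as [|n IH]; intros R G D H;
    destruct (hderiv_last_rule _ _ _ _ _ H)
      as (m & Rc & Gc & Dc & ps & e & R1 & G1 & D1 & Hm & Hr & Hf & Hps & PR & PG & PD);
    [discriminate|]. injection Hm as ->.
  destruct (perm_split _ _ _ _ PD) as [(D1' & P1 & P2) | (Dc' & P1 & P2)].
  - destruct (rule_rename_eigen _ _ _ _ _ _ _ R1 G1 D1 AW AN Hr Hf Hps)
      as (ps' & e' & Hr' & Hf' & Hav & Hps').
    apply (hderiv_rule_perm s m Rc Gc Dc ps' e' (Ra ++ R1) (Ga ++ G1) (Da ++ D1')); [exact Hr'| | |..].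
    + assert (Hfe : eigen_fresh e' (Ra ++ Rc ++ R1) (Ga ++ Gc ++ G1) (Da ++ Dc ++ D1)).
      { apply (eigen_fresh_extend _ _ _ _ _ _ _ AW AN Hf' Hav).
        - intros y Hy. apply Hw in Hy as [Hy|Hy]; [left|right; exact Hy].
          eapply wlabels_suc; [|exact Hy]. apply in_or_app. right. rewrite P1. left; auto.
        - intros a Ha. apply Hn in Ha as [Ha|Ha]; [left|right; exact Ha].
          eapply nlabels_suc; [|exact Ha]. apply in_or_app. right. rewrite P1. left; auto. }
      fresh_incl Hfe.
    + intros p Hp0. eapply hd_perm;
        [apply (IH (pR p ++ R1) (pG p ++ G1) (pD p ++ D1'));
         eapply hd_perm; [exact (Hps' p Hp0) | reflexivity | reflexivity | rewrite P1; perm_solve]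
        | perm_solve | perm_solve | perm_solve].
    + rewrite <- PR; perm_solve.
    + rewrite <- PG; perm_solve.
    + rewrite P2; perm_solve.
  - destruct (rule_length _ _ _ _ _ _ Hr) as (_ & _ & HDc).
    destruct (perm_single _ _ _ HDc P1) as [-> ->].
    eapply hd_perm; [apply (Hp m Rc Gc ps e R1 G1 D1 Hr Hf Hps) | rewrite <- PR; perm_solve
                        | rewrite <- PG; perm_solve | rewrite P2; perm_solve].
Qed.

Ltac labels_solve := intros ?y ?Hy; unfold wlabels, nlabels in *; simpl in *; intuition (subst; auto).
Ltac finish_from H :=
  unfold pR, pG, pD in H; simpl in *;
  eapply hderiv_mono; [eapply hd_perm; [exact H | perm_solve | perm_solve | perm_solve] | lia].
Ltac premise_repeats Hp Hnot :=
  exfalso; simpl in Hp; repeat destruct Hp as [<-|Hp]; try contradiction; apply Hnot; simpl; auto.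
Ltac premise_labels Hp :=
  simpl in Hp; repeat destruct Hp as [<-|Hp]; try contradiction; labels_solve.

(* For the eigenvariable rules, any label may replace the eigenvariable in the premise. *)
Lemma hderiv_inv_premise_left s Rc f Dc ps e p :
  rule s Rc [f] Dc ps e -> In p ps -> ~ In f (pG p) ->
  forall n R G D, hderiv s n R (f :: G) D -> hderiv s n (pR p ++ R) (pG p ++ G) (pD p ++ D).
Proof.
  intros Hr. remember [f] as Gc eqn:HGc. intros Hp Hnot n.
  destruct Hr; try discriminate HGc; injection HGc as <-;
    try (simpl in Hp; contradiction); try solve [premise_repeats Hp Hnot].
  4: {
    simpl in Hp. destruct Hp as [<-|[]]. cbn [pR pG pD fst snd].
    apply (hderiv_inv_left s (LEx a A) [RIn x a] [LW x A] [] [x] []); [labels_solve..|].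
    intros m Rc' Dc' ps' e' R1 G1 D1 Hr' Hf' Hps'. inversion Hr'; subst. simpl in Hf'.
    pose proof (Hps' _ (or_introl eq_refl)) as HP.
    apply (hderiv_ren_w _ _ [RIn x0 a] [LW x0 A] [] R1 G1 D1 x0 x) in HP.
    - cbn [map ren_ratom ren_lform app] in HP. rewrite ren_w_eq in HP. finish_from HP.
    - intros Hin. apply Hf'. revert Hin. apply wlabels_incl; incl_solve. }
  4: {
    simpl in Hp. destruct Hp as [<-|[]]. cbn [pR pG pD fst snd].
    apply (hderiv_inv_left s (LCnd x a A B) [RN c x; RSub c a] [LEx c A; LAll c (Imp A B)] [] [] [c]);
      [labels_solve..|].
    intros m Rc' Dc' ps' e' R1 G1 D1 Hr' Hf' Hps'. inversion Hr'; subst. simpl in Hf'.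
    pose proof (Hps' _ (or_introl eq_refl)) as HP.
    apply (hderiv_ren_n _ _ [RN c0 x; RSub c0 a] [LEx c0 A; LAll c0 (Imp A B)] [] R1 G1 D1 c0 c) in HP.
    - cbn [map ren_ratom ren_lform app] in HP. rewrite ren_n_eq, ren_n_neq in HP; [finish_from HP|].
      intros ->. apply Hf'. apply (nlabels_ant (LCnd x c0 A B)); simpl; auto.
    - intros Hin. apply Hf'. revert Hin. apply nlabels_incl; incl_solve. }
  all: apply (hderiv_inv_left s _ (pR p) (pG p) (pD p) [] []); [premise_labels Hp..|];
    intros m Rc' Dc' ps' e' R1 G1 D1 Hr' Hf' Hps'; inversion Hr'; subst;
    pose proof (Hps' p Hp) as HP; finish_from HP.
Qed.

Lemma hderiv_inv_premise_right s Rc Gc f ps e p :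
  rule s Rc Gc [f] ps e -> In p ps -> ~ In f (pD p) ->
  forall n R G D, hderiv s n R G (f :: D) -> hderiv s n (pR p ++ R) (pG p ++ G) (pD p ++ D).
Proof.
  intros Hr. remember [f] as Dc eqn:HDc. intros Hp Hnot n.
  destruct Hr; try discriminate HDc; injection HDc as <-;
    try (simpl in Hp; contradiction); try solve [premise_repeats Hp Hnot].
  4: {
    simpl in Hp. destruct Hp as [<-|[]]. cbn [pR pG pD fst snd].
    apply (hderiv_inv_right s (LAll a A) [RIn x a] [] [LW x A] [x] []); [labels_solve..|].
    intros m Rc' Gc' ps' e' R1 G1 D1 Hr' Hf' Hps'. inversion Hr'; subst. simpl in Hf'.
    pose proof (Hps' _ (or_introl eq_refl)) as HP.
    apply (hderiv_ren_w _ _ [RIn x0 a] [] [LW x0 A] R1 G1 D1 x0 x) in HP.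
    - cbn [map ren_ratom ren_lform app] in HP. rewrite ren_w_eq in HP. finish_from HP.
    - intros Hin. apply Hf'. revert Hin. apply wlabels_incl; incl_solve. }
  4: {
    simpl in Hp. destruct Hp as [<-|[]]. cbn [pR pG pD fst snd].
    apply (hderiv_inv_right s (LW x (Cnd A B)) [RN a x] [LEx a A] [LCnd x a A B] [] [a]); [labels_solve..|].
    intros m Rc' Gc' ps' e' R1 G1 D1 Hr' Hf' Hps'. inversion Hr'; subst. simpl in Hf'.
    pose proof (Hps' _ (or_introl eq_refl)) as HP.
    apply (hderiv_ren_n _ _ [RN a0 x] [LEx a0 A] [LCnd x a0 A B] R1 G1 D1 a0 a) in HP.
    - cbn [map ren_ratom ren_lform app] in HP. rewrite ren_n_eq in HP. finish_from HP.
    - intros Hin. apply Hf'. revert Hin. apply nlabels_incl; incl_solve. }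
  all: apply (hderiv_inv_right s _ (pR p) (pG p) (pD p) [] []); [premise_labels Hp..|];
    intros m Rc' Gc' ps' e' R1 G1 D1 Hr' Hf' Hps'; inversion Hr'; subst;
    pose proof (Hps' p Hp) as HP; finish_from HP.
Qed.

Lemma perm_split_two {T} (Rc R1 R : list T) r : Permutation (Rc ++ R1) (r :: r :: R) ->
  (exists R1', Permutation R1 (r :: r :: R1') /\ Permutation R (Rc ++ R1')) \/
  (exists Rc' R1', Permutation Rc (r :: Rc') /\ Permutation R1 (r :: R1') /\ Permutation R (Rc' ++ R1')) \/
  (exists Rc', Permutation Rc (r :: r :: Rc') /\ Permutation R (Rc' ++ R1)).
Proof.
  intros HP. destruct (perm_split _ _ _ _ HP) as [(R1' & P1 & P2) | (Rc' & P1 & P2)];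
    symmetry in P2; destruct (perm_split _ _ _ _ P2) as [(R1'' & P3 & P4) | (Rc'' & P3 & P4)].
  - left. exists R1''. split; [rewrite P1, P3|rewrite P4]; reflexivity.
  - right; left. exists Rc'', R1'. repeat split; [exact P3 | exact P1 | rewrite P4; reflexivity].
  - right; left. exists Rc', R1''. repeat split; [exact P1 | exact P3 | rewrite P4; reflexivity].
  - right; right. exists Rc''. split; [rewrite P1, P3|rewrite P4]; reflexivity.
Qed.

Lemma perm_double {T} (Rc : list T) r l : length Rc <= 2 -> Permutation Rc (r :: r :: l) ->
  Rc = [r; r] /\ l = [].
Proof.
  intros Hl HP. pose proof (Permutation_length HP) as HL. simpl in HL.
  destruct Rc as [|r1 [|r2 [|r3 Rc]]]; simpl in *; try lia.
  destruct l; [|simpl in HL; lia].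
  assert (Hi1 : In r1 [r; r]) by (rewrite <- HP; left; auto).
  assert (Hi2 : In r2 [r; r]) by (rewrite <- HP; right; left; auto).
  simpl in Hi1, Hi2. split; [|auto]. f_equal; [|f_equal]; intuition congruence.
Qed.

Lemma rule_keeps_rel s Rc Gc Dc ps e p : rule s Rc Gc Dc ps e -> In p ps ->
  exists R', Permutation (pR p) (R' ++ Rc).
Proof.
  intros H Hp; destruct H; simpl in Hp; repeat destruct Hp as [<-|Hp]; try contradiction;
    unfold pR; simpl.
  all: first [ exists []; reflexivity | eexists; rewrite app_nil_r; reflexivity
             | exists [RSub c a]; reflexivity | exists [RIn x b]; perm_solve ].
Qed.

(** * Contraction *)

Lemma hderiv_contract_rel s n : forall r R G D, hderiv s n (r :: r :: R) G D -> hderiv s n (r :: R) G D.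
Proof.
  induction n as [|n IH]; intros r R G D H;
    destruct (hderiv_last_rule _ _ _ _ _ H)
      as (m & Rc & Gc & Dc & ps & e & R1 & G1 & D1 & Hm & Hr & Hf & Hps & PR & PG & PD);
    [discriminate|]. injection Hm as ->.
  destruct (perm_split_two _ _ _ _ PR)
    as [(R1' & P1 & P2) | [(Rc' & R1' & P1 & P2 & P3) | (Rc' & P1 & P2)]].
  - apply (hderiv_rule_perm s m Rc Gc Dc ps e (r :: R1') G1 D1);
      [exact Hr | fresh_incl Hf | | rewrite P2; perm_solve | exact PG | exact PD].
    intros p Hp. eapply hd_perm; [apply (IH r (pR p ++ R1')) | perm_solve | reflexivity | reflexivity].
    eapply hd_perm; [exact (Hps p Hp) | rewrite P1; perm_solve | reflexivity | reflexivity].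
  - apply (hderiv_rule_perm s m Rc Gc Dc ps e R1' G1 D1);
      [exact Hr | fresh_incl Hf | | rewrite P3, P1; perm_solve | exact PG | exact PD].
    intros p Hp. destruct (rule_keeps_rel _ _ _ _ _ _ _ Hr Hp) as [R' HR'].
    eapply hd_perm; [apply (IH r (R' ++ Rc' ++ R1')) | rewrite HR', P1; perm_solve | reflexivity | reflexivity].
    eapply hd_perm; [exact (Hps p Hp) | rewrite HR', P1, P2; perm_solve | reflexivity | reflexivity].
  - (* both copies principal: only Tr, with c = b = a *)
    destruct (rule_length _ _ _ _ _ _ Hr) as (HRc & _ & _).
    destruct (perm_double _ _ _ HRc P1) as [-> ->].
    inversion Hr; subst; try discriminate;
      repeat match goal with Hq : RSub _ _ = RSub _ _ |- _ => injection Hq as <- <- end.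
    pose proof (Hps _ (or_introl eq_refl)) as HP. unfold pR, pG, pD in HP; simpl in HP.
    eapply hderiv_mono with (n := m); [|lia].
    eapply hd_perm; [apply (IH (RSub a a) R1), IH, HP | rewrite P2; perm_solve | exact PG | exact PD].
Qed.

Lemma hderiv_contract_rel_in s n r R G D : In r R -> hderiv s n (r :: R) G D -> hderiv s n R G D.
Proof.
  intros Hin H. apply in_split in Hin as (l1 & l2 & ->).
  eapply hd_perm; [apply (hderiv_contract_rel s n r (l1 ++ l2)) | perm_solve | reflexivity | reflexivity].
  eapply hd_perm; [exact H | perm_solve | reflexivity | reflexivity].
Qed.

(* The weights make the active formulas of every rule that does not repeat its principal
   formula lighter than it; the only delicate chain is [x : A > B], [x ⊩_a A|B], [c ⊩∀ A → B]. *)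
Fixpoint form_size (A : form) : nat :=
  match A with
  | Var _ | Bot => 1
  | And A B | Or A B | Imp A B => form_size A + form_size B + 1
  | Cnd A B => form_size A + form_size B + 4
  end.
Definition weight (f : lform) : nat :=
  match f with
  | LW _ A => form_size A
  | LAll _ A | LEx _ A => form_size A + 1
  | LCnd _ _ A B => form_size A + form_size B + 3
  end.

Lemma rule_premise_lighter_left s Rc f Dc ps e p : rule s Rc [f] Dc ps e -> In p ps -> ~ In f (pG p) ->
  forall g, In g (pG p ++ pD p) -> weight g < weight f.
Proof.
  intros Hr. remember [f] as Gc eqn:HGc. intros Hp Hnot g Hg.
  destruct Hr; try discriminate HGc; injection HGc as <-; simpl in Hp;
    repeat destruct Hp as [<-|Hp]; try contradiction; unfold pG, pD in *; simpl in *;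
    try (exfalso; apply Hnot; auto; fail);
    repeat destruct Hg as [<-|Hg]; try contradiction; simpl; lia.
Qed.
Lemma rule_premise_lighter_right s Rc Gc f ps e p : rule s Rc Gc [f] ps e -> In p ps -> ~ In f (pD p) ->
  forall g, In g (pG p ++ pD p) -> weight g < weight f.
Proof.
  intros Hr. remember [f] as Dc eqn:HDc. intros Hp Hnot g Hg.
  destruct Hr; try discriminate HDc; injection HDc as <-; simpl in Hp;
    repeat destruct Hp as [<-|Hp]; try contradiction; unfold pG, pD in *; simpl in *;
    try (exfalso; apply Hnot; auto; fail);
    repeat destruct Hg as [<-|Hg]; try contradiction; simpl; lia.
Qed.

Definition contractible_left (s : bool) (n : nat) (f : lform) : Prop :=
  forall R G D, hderiv s n R (f :: f :: G) D -> hderiv s n R (f :: G) D.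
Definition contractible_right (s : bool) (n : nat) (f : lform) : Prop :=
  forall R G D, hderiv s n R G (f :: f :: D) -> hderiv s n R G (f :: D).

Lemma contract_left_in s n f R G D : contractible_left s n f -> In f G ->
  hderiv s n R (f :: G) D -> hderiv s n R G D.
Proof.
  intros C Hin H. apply in_split in Hin as (l1 & l2 & ->).
  eapply hd_perm; [apply (C R (l1 ++ l2) D) | reflexivity | perm_solve | reflexivity].
  eapply hd_perm; [exact H | reflexivity | perm_solve | reflexivity].
Qed.
Lemma contract_right_in s n f R G D : contractible_right s n f -> In f D ->
  hderiv s n R G (f :: D) -> hderiv s n R G D.
Proof.
  intros C Hin H. apply in_split in Hin as (l1 & l2 & ->).
  eapply hd_perm; [apply (C R G (l1 ++ l2)) | reflexivity | reflexivity | perm_solve].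
  eapply hd_perm; [exact H | reflexivity | reflexivity | perm_solve].
Qed.

Lemma contract_rel_list s n L R G D : hderiv s n (L ++ L ++ R) G D -> hderiv s n (L ++ R) G D.
Proof.
  induction L as [|r L IH] in R |- *; intros H; [exact H|].
  eapply hd_perm; [apply (IH (r :: R)) | perm_solve | reflexivity | reflexivity].
  apply (hderiv_contract_rel_in _ _ r); [apply in_or_app; right; apply in_or_app; right; left; auto|].
  eapply hd_perm; [exact H | perm_solve | reflexivity | reflexivity].
Qed.
Lemma contract_left_list s n L R G D : (forall g, In g L -> contractible_left s n g) ->
  hderiv s n R (L ++ L ++ G) D -> hderiv s n R (L ++ G) D.
Proof.
  induction L as [|g L IH] in G |- *; intros C H; [exact H|].
  eapply hd_perm; [apply (IH (g :: G)) | reflexivity | perm_solve | reflexivity].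
  - intros; apply C; right; auto.
  - apply (contract_left_in _ _ g); [apply C; left; auto | apply in_or_app; right; apply in_or_app; right; left; auto |].
    eapply hd_perm; [exact H | reflexivity | perm_solve | reflexivity].
Qed.
Lemma contract_right_list s n L R G D : (forall g, In g L -> contractible_right s n g) ->
  hderiv s n R G (L ++ L ++ D) -> hderiv s n R G (L ++ D).
Proof.
  induction L as [|g L IH] in D |- *; intros C H; [exact H|].
  eapply hd_perm; [apply (IH (g :: D)) | reflexivity | reflexivity | perm_solve].
  - intros; apply C; right; auto.
  - apply (contract_right_in _ _ g); [apply C; left; auto | apply in_or_app; right; apply in_or_app; right; left; auto |].
    eapply hd_perm; [exact H | reflexivity | reflexivity | perm_solve].
Qed.

Lemma lform_eq_dec (f g : lform) : {f = g} + {f <> g}.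
Proof. do 2 decide equality; apply Nat.eq_dec. Qed.

Section ContractionStep.
Variables (s : bool) (m : nat) (f : lform).
Hypothesis IH_lighter : forall g, weight g < weight f -> contractible_left s m g /\ contractible_right s m g.
Hypothesis IH_left : contractible_left s m f.
Hypothesis IH_right : contractible_right s m f.

(* If [f] is principal, the other copy of [f] is either repeated in the premise or can be
   inverted there, duplicating the lighter active formulas. *)
Lemma contract_principal_left Rc Dc ps e R1 G1 D1 G :
  rule s Rc [f] Dc ps e -> eigen_fresh e (Rc ++ R1) (f :: G1) (Dc ++ D1) ->
  (forall p, In p ps -> hderiv s m (pR p ++ R1) (pG p ++ G1) (pD p ++ D1)) ->
  Permutation G1 (f :: G) -> hderiv s (S m) (Rc ++ R1) (f :: G) (Dc ++ D1).
Proof.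
  intros Hr Hf Hps P1.
  apply (hderiv_rule_perm s m Rc [f] Dc ps e R1 G D1);
    [exact Hr | fresh_incl Hf | | reflexivity | reflexivity | reflexivity].
  intros p Hp. assert (HP : hderiv s m (pR p ++ R1) (f :: pG p ++ G) (pD p ++ D1))
    by (eapply hd_perm; [exact (Hps p Hp) | reflexivity | rewrite P1; perm_solve | reflexivity]).
  destruct (in_dec lform_eq_dec f (pG p)) as [Hin|Hnot].
  - apply (contract_left_in _ _ f); [exact IH_left | apply in_or_app; left; exact Hin | exact HP].
  - pose proof (rule_premise_lighter_left _ _ _ _ _ _ _ Hr Hp Hnot) as Hlight.
    apply (hderiv_inv_premise_left _ _ _ _ _ _ _ Hr Hp Hnot) in HP.
    apply contract_rel_list, contract_left_list, contract_right_list;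
      [intros g Hg; apply IH_lighter, Hlight, in_or_app; auto..|].
    eapply hd_perm; [exact HP | perm_solve | perm_solve | perm_solve].
Qed.

Lemma contract_principal_right Rc Gc ps e R1 G1 D1 D :
  rule s Rc Gc [f] ps e -> eigen_fresh e (Rc ++ R1) (Gc ++ G1) (f :: D1) ->
  (forall p, In p ps -> hderiv s m (pR p ++ R1) (pG p ++ G1) (pD p ++ D1)) ->
  Permutation D1 (f :: D) -> hderiv s (S m) (Rc ++ R1) (Gc ++ G1) (f :: D).
Proof.
  intros Hr Hf Hps P1.
  apply (hderiv_rule_perm s m Rc Gc [f] ps e R1 G1 D);
    [exact Hr | fresh_incl Hf | | reflexivity | reflexivity | reflexivity].
  intros p Hp. assert (HP : hderiv s m (pR p ++ R1) (pG p ++ G1) (f :: pD p ++ D))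
    by (eapply hd_perm; [exact (Hps p Hp) | reflexivity | reflexivity | rewrite P1; perm_solve]).
  destruct (in_dec lform_eq_dec f (pD p)) as [Hin|Hnot].
  - apply (contract_right_in _ _ f); [exact IH_right | apply in_or_app; left; exact Hin | exact HP].
  - pose proof (rule_premise_lighter_right _ _ _ _ _ _ _ Hr Hp Hnot) as Hlight.
    apply (hderiv_inv_premise_right _ _ _ _ _ _ _ Hr Hp Hnot) in HP.
    apply contract_rel_list, contract_left_list, contract_right_list;
      [intros g Hg; apply IH_lighter, Hlight, in_or_app; auto..|].
    eapply hd_perm; [exact HP | perm_solve | perm_solve | perm_solve].
Qed.

Lemma contract_step_left : contractible_left s (S m) f.
Proof.
  intros R G D H.
  destruct (hderiv_last_rule _ _ _ _ _ H)
    as (m' & Rc & Gc & Dc & ps & e & R1 & G1 & D1 & Hm & Hr & Hf & Hps & PR & PG & PD).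
  injection Hm as <-. destruct (rule_length _ _ _ _ _ _ Hr) as (_ & HGc & _).
  destruct (perm_split_two _ _ _ _ PG)
    as [(G1' & P1 & P2) | [(Gc' & G1' & P1 & P2 & P3) | (Gc' & P1 & _)]].
  - apply (hderiv_rule_perm s m Rc Gc Dc ps e R1 (f :: G1') D1);
      [exact Hr | fresh_incl Hf | | exact PR | rewrite P2; perm_solve | exact PD].
    intros p Hp. eapply hd_perm;
      [apply (IH_left (pR p ++ R1) (pG p ++ G1') (pD p ++ D1)) | reflexivity | perm_solve | reflexivity].
    eapply hd_perm; [exact (Hps p Hp) | reflexivity | rewrite P1; perm_solve | reflexivity].
  - destruct (perm_single _ _ _ HGc P1) as [-> ->].
    eapply hd_perm; [apply (contract_principal_left Rc Dc ps e R1 G1 D1 G1' Hr Hf Hps P2)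
                    | exact PR | rewrite P3; reflexivity | exact PD].
  - apply Permutation_length in P1. simpl in P1. lia.
Qed.

Lemma contract_step_right : contractible_right s (S m) f.
Proof.
  intros R G D H.
  destruct (hderiv_last_rule _ _ _ _ _ H)
    as (m' & Rc & Gc & Dc & ps & e & R1 & G1 & D1 & Hm & Hr & Hf & Hps & PR & PG & PD).
  injection Hm as <-. destruct (rule_length _ _ _ _ _ _ Hr) as (_ & _ & HDc).
  destruct (perm_split_two _ _ _ _ PD)
    as [(D1' & P1 & P2) | [(Dc' & D1' & P1 & P2 & P3) | (Dc' & P1 & _)]].
  - apply (hderiv_rule_perm s m Rc Gc Dc ps e R1 G1 (f :: D1'));
      [exact Hr | fresh_incl Hf | | exact PR | exact PG | rewrite P2; perm_solve].
    intros p Hp. eapply hd_perm;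
      [apply (IH_right (pR p ++ R1) (pG p ++ G1) (pD p ++ D1')) | reflexivity | reflexivity | perm_solve].
    eapply hd_perm; [exact (Hps p Hp) | reflexivity | reflexivity | rewrite P1; perm_solve].
  - destruct (perm_single _ _ _ HDc P1) as [-> ->].
    eapply hd_perm; [apply (contract_principal_right Rc Gc ps e R1 G1 D1 D1' Hr Hf Hps P2)
                    | exact PR | exact PG | rewrite P3; reflexivity].
  - apply Permutation_length in P1. simpl in P1. lia.
Qed.
End ContractionStep.

Lemma contractible_bounded s w : forall n f, weight f < w ->
  contractible_left s n f /\ contractible_right s n f.
Proof.
  induction w as [|w IHw]; intros n f Hw; [lia|].
  induction n as [|n IHn].
  - split; intros R G D H;
      destruct (hderiv_last_rule _ _ _ _ _ H) as (m & ? & ? & ? & ? & ? & ? & ? & ? & Hm & _); discriminate.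
  - destruct IHn as [IHl IHr].
    assert (IHg : forall g, weight g < weight f -> contractible_left s n g /\ contractible_right s n g)
      by (intros g Hg; apply IHw; lia).
    split; [apply contract_step_left | apply contract_step_right]; assumption.
Qed.

Lemma hderiv_contract_left s n f R G D : hderiv s n R (f :: f :: G) D -> hderiv s n R (f :: G) D.
Proof. apply (contractible_bounded s (S (weight f)) n f). lia. Qed.

(** * Weakening and the admissible rules *)

(* Weakening by formulas whose labels already occur in relational atoms: eigenvariables,
   being fresh for the relational atoms, stay fresh, so no renaming is needed. *)
Lemma hderiv_weaken_known s n : forall R G D, hderiv s n R G D -> forall Ra Ga Da,
  (forall y, In y (wlabels Ra Ga Da) -> In y (flat_map ratom_w R)) ->
  (forall a, In a (nlabels Ra Ga Da) -> In a (flat_map ratom_n R)) ->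
  hderiv s n (Ra ++ R) (Ga ++ G) (Da ++ D).
Proof.
  induction n as [|n IH]; intros R G D H Ra Ga Da Hw Hn;
    destruct (hderiv_last_rule _ _ _ _ _ H)
      as (m & Rc & Gc & Dc & ps & e & R1 & G1 & D1 & Hm & Hr & Hf & Hps & PR & PG & PD);
    [discriminate|]. injection Hm as ->.
  assert (HR : forall p, In p ps -> incl R (pR p ++ R1)).
  { intros p Hp z Hz. destruct (rule_keeps_rel _ _ _ _ _ _ _ Hr Hp) as [R' HR'].
    rewrite HR'. rewrite <- PR in Hz. revert Hz. incl_solve. }
  apply (hderiv_rule_perm s m Rc Gc Dc ps e (Ra ++ R1) (Ga ++ G1) (Da ++ D1)); [exact Hr | | | ..].
  - assert (Hfe : eigen_fresh e (Ra ++ Rc ++ R1) (Ga ++ Gc ++ G1) (Da ++ Dc ++ D1)).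
    { apply (eigen_fresh_extend _ _ _ _ _ _ _ [] [] Hf); [destruct e; simpl; auto|..].
      - intros y Hy. left. apply Hw in Hy. rewrite <- PR in Hy. unfold wlabels. rewrite !in_app_iff. auto.
      - intros a Ha. left. apply Hn in Ha. rewrite <- PR in Ha. unfold nlabels. rewrite !in_app_iff. auto. }
    revert Hfe. apply eigen_fresh_incl; incl_solve.
  - intros p Hp. eapply hd_perm; [apply (IH _ _ _ (Hps p Hp) Ra Ga Da) | perm_solve | perm_solve | perm_solve].
    + intros y Hy. eapply flat_map_incl; [apply HR, Hp | apply Hw, Hy].
    + intros a Ha. eapply flat_map_incl; [apply HR, Hp | apply Hn, Ha].
  - rewrite <- PR; perm_solve.
  - rewrite <- PG; perm_solve.
  - rewrite <- PD; perm_solve.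
Qed.

Lemma derivable_rule s Rc Gc Dc ps e R G D : rule s Rc Gc Dc ps e ->
  eigen_fresh e (Rc ++ R) (Gc ++ G) (Dc ++ D) ->
  (forall p, In p ps -> derivable s (pR p ++ R) (pG p ++ G) (pD p ++ D)) ->
  derivable s (Rc ++ R) (Gc ++ G) (Dc ++ D).
Proof.
  intros Hr Hf Hps.
  assert (Hn : exists n, forall p, In p ps -> hderiv s n (pR p ++ R) (pG p ++ G) (pD p ++ D)).
  { clear Hr Hf. induction ps as [|p0 ps IH]; [exists 0; intros p []|].
    destruct (derivable_hderiv _ _ _ _ (Hps p0 (or_introl eq_refl))) as [n0 H0].
    destruct IH as [n1 H1]; [intros; apply Hps; right; auto|].
    exists (max n0 n1). intros p [<-|Hp]; eapply hderiv_mono; eauto; lia. }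
  destruct Hn as [n Hn]. eapply hderiv_derivable, hd_rule; eauto.
Qed.

Lemma derivable_weaken_known s R G D Ra Ga Da : derivable s R G D ->
  (forall y, In y (wlabels Ra Ga Da) -> In y (flat_map ratom_w R)) ->
  (forall a, In a (nlabels Ra Ga Da) -> In a (flat_map ratom_n R)) ->
  derivable s (Ra ++ R) (Ga ++ G) (Da ++ D).
Proof.
  intros H Hw Hn. destruct (derivable_hderiv _ _ _ _ H) as [n Hd].
  eapply hderiv_derivable, hderiv_weaken_known; eauto.
Qed.

Lemma rule_keeps_all_left s Rc Gc Dc ps e p a A : rule s Rc Gc Dc ps e -> In p ps ->
  In (LAll a A) Gc -> In (LAll a A) (pG p).
Proof.
  intros Hr Hp Hin; destruct Hr; simpl in Hp; repeat destruct Hp as [<-|Hp]; try contradiction;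
    unfold pG; simpl in *; repeat destruct Hin as [Hin|Hin]; try discriminate; try contradiction; auto.
Qed.

Lemma mon_all_principal s x a b A R G D : In (RSub b a) R -> In (LAll a A) G ->
  derivable s (RIn x b :: R) (LW x A :: G) D -> derivable s (RIn x b :: R) G D.
Proof.
  intros Hb Ha H.
  apply (derivable_weaken_known _ _ _ _ [RIn x a] [] []) in H.
  2: { unfold wlabels. simpl. tauto. }
  2: { intros c Hc. simpl in Hc. destruct Hc as [<-|[]]. simpl. right.
       apply in_flat_map. exists (RSub b a). split; simpl; auto. }
  apply in_split in Hb as (l1 & l2 & ->). apply in_split in Ha as (g1 & g2 & ->).
  eapply d_perm with (R := RIn x b :: RSub b a :: l1 ++ l2);
    [apply d_Lsub | perm_solve | reflexivity | reflexivity].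
  eapply d_perm with (R := RIn x a :: RIn x b :: RSub b a :: l1 ++ l2) (G := LAll a A :: g1 ++ g2);
    [apply d_Lall | perm_solve | perm_solve | reflexivity].
  eapply d_perm; [exact H | perm_solve | perm_solve | reflexivity].
Qed.

Lemma hderiv_mon_all s n : forall R G D, hderiv s n R G D -> forall a b A G',
  Permutation G (LAll b A :: G') -> In (LAll a A) G' -> In (RSub b a) R -> derivable s R G' D.
Proof.
  induction n as [|n IH]; intros R G D H a b A G' HG Ha Hb;
    destruct (hderiv_last_rule _ _ _ _ _ H)
      as (m & Rc & Gc & Dc & ps & e & R1 & G1 & D1 & Hm & Hr & Hf & Hps & PR & PG & PD);
    [discriminate|]. injection Hm as ->.
  rewrite HG in PG. destruct (perm_split _ _ _ _ PG) as [(G1' & P1 & P2) | (Gc' & P1 & P2)].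
  - eapply d_perm; [apply (derivable_rule s Rc Gc Dc ps e R1 G1' D1) | exact PR | rewrite P2; reflexivity | exact PD].
    + exact Hr.
    + fresh_incl Hf.
    + intros p Hp. apply (IH _ _ _ (Hps p Hp) a b A).
      * rewrite P1. perm_solve.
      * rewrite P2 in Ha. apply in_app_iff in Ha as [Ha|Ha]; apply in_app_iff; [left|right; exact Ha].
        eapply rule_keeps_all_left; eauto.
      * destruct (rule_keeps_rel _ _ _ _ _ _ _ Hr Hp) as [R' HR']. rewrite HR'.
        rewrite <- PR in Hb. revert Hb. incl_solve.
  - destruct (rule_length _ _ _ _ _ _ Hr) as (_ & HGc & _).
    destruct (perm_single _ _ _ HGc P1) as [-> ->]. simpl in P2.
    inversion Hr; subst.
    pose proof (Hps _ (or_introl eq_refl)) as HP. unfold pR, pG, pD in HP; simpl in HP.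
    assert (Hb' : In (RSub b a) R1) by (rewrite <- PR in Hb; destruct Hb as [Hb|Hb]; [discriminate|exact Hb]).
    assert (HaG : In (LAll a A) G1) by (rewrite <- P2; exact Ha).
    eapply d_perm; [apply (mon_all_principal s x a b A R1 G1 D1 Hb' HaG) | exact PR | rewrite P2; reflexivity | exact PD].
    apply (IH _ _ _ HP a b A); [perm_solve | right; exact HaG | right; exact Hb'].
Qed.

Lemma hderiv_inv_Lex s n R G D a A z :
  hderiv s n R (LEx a A :: G) D -> hderiv s n (RIn z a :: R) (LW z A :: G) D.
Proof.
  apply (hderiv_inv_premise_left s [] _ [] _ _ ([RIn z a], [LW z A], []) (r_Lex s z a A)); simpl; auto.
  intros [H|[]]. discriminate.
Qed.
Lemma hderiv_inv_Lbar s n R G D x a A B c : hderiv s n R (LCnd x a A B :: G) D ->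
  hderiv s n (RN c x :: RSub c a :: R) (LEx c A :: LAll c (Imp A B) :: G) D.
Proof.
  apply (hderiv_inv_premise_left s [] _ [] _ _ ([RN c x; RSub c a], [LEx c A; LAll c (Imp A B)], [])
           (r_Lbar s x a c A B)); simpl; auto.
  intros [H|[H|[]]]; discriminate.
Qed.

Lemma mon_all_admissible s a b A R G D :
  derivable s (RSub b a :: R) (LAll b A :: LAll a A :: G) D ->
  derivable s (RSub b a :: R) (LAll a A :: G) D.
Proof.
  intros H. destruct (derivable_hderiv _ _ _ _ H) as [n Hn].
  eapply hderiv_mon_all; [exact Hn | reflexivity | left; reflexivity | left; reflexivity].
Qed.

Lemma Lcnd_star_admissible x a A B R G D :
  CL (RN a x :: R) (LW x (Cnd A B) :: G) (LEx a A :: D) ->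
  CL (RN a x :: R) (LEx a A :: LCnd x a A B :: LW x (Cnd A B) :: G) D ->
  CL (RN a x :: R) (LW x (Cnd A B) :: G) D.
Proof.
  intros H1 H2. destruct (derivable_hderiv _ _ _ _ H2) as [n Q].
  destruct (fresh_nat (nlabels (RN a x :: R) (LCnd x a A B :: LW x (Cnd A B) :: G) D)) as [c Hc].
  destruct (fresh_nat (wlabels (RN c x :: RSub c a :: RN a x :: R)
              (LEx c A :: LAll c (Imp A B) :: LW x (Cnd A B) :: G) D)) as [y Hy].
  apply (hderiv_inv_Lex _ _ _ _ _ a A y) in Q.
  assert (Qc : hderiv false n (RIn y c :: RN c x :: RSub c a :: RIn y a :: RN a x :: R)
                 (LW y A :: LAll c (Imp A B) :: LW x (Cnd A B) :: G) D).
  { apply hderiv_contract_left, hderiv_inv_Lex.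
    eapply hd_perm; [apply (hderiv_inv_Lbar _ _ (RIn y a :: RN a x :: R) (LW y A :: LW x (Cnd A B) :: G) D x a A B c)
                        | reflexivity | perm_solve | reflexivity].
    eapply hd_perm; [exact Q | reflexivity | perm_solve | reflexivity]. }
  apply hderiv_derivable in Qc.
  apply d_Lcnd; [reflexivity | exact H1 |].
  apply (d_Lbar false x a c A B (RN a x :: R) (LW x (Cnd A B) :: G) D).
  { apply nfresh_iff. intros Hin. apply Hc. revert Hin. apply nlabels_incl; incl_solve. }
  apply (d_Lex false y c A (RN c x :: RSub c a :: RN a x :: R) (LAll c (Imp A B) :: LW x (Cnd A B) :: G) D).
  { apply wfresh_iff. intros Hin. apply Hy. revert Hin. apply wlabels_incl; incl_solve. }
  eapply d_perm with (R := RIn y c :: RSub c a :: RN c x :: RN a x :: R);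
    [apply d_Lsub | perm_solve | reflexivity | reflexivity].
  eapply d_perm; [exact Qc | perm_solve | reflexivity | reflexivity].
Qed.

Lemma Lcnd_admissible_star x a A B R G D :
  CLstar (RN a x :: R) (LW x (Cnd A B) :: G) (LEx a A :: D) ->
  CLstar (RN a x :: R) (LCnd x a A B :: LW x (Cnd A B) :: G) D ->
  CLstar (RN a x :: R) (LW x (Cnd A B) :: G) D.
Proof.
  intros H1 H2. apply d_Lcnd_star; [reflexivity | exact H1 |].
  apply (derivable_weaken_known _ _ _ _ [] [LEx a A] []) in H2; [exact H2 | ..];
    intros y Hy; unfold wlabels, nlabels in Hy; simpl in *; tauto.
Qed.

Theorem mainTheorem15 :
  (* (1) Mon∀ is admissible in CL *)
  (forall a b A R G D,
     CL (RSub b a :: R) (LAll b A :: LAll a A :: G) D ->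
     CL (RSub b a :: R) (LAll a A :: G) D)
  /\
  (* (2a) L>* is admissible in CL *)
  (forall x a A B R G D,
     CL (RN a x :: R) (LW x (Cnd A B) :: G) (LEx a A :: D) ->
     CL (RN a x :: R) (LEx a A :: LCnd x a A B :: LW x (Cnd A B) :: G) D ->
     CL (RN a x :: R) (LW x (Cnd A B) :: G) D)
  /\
  (* (2b) L> is admissible in CL with L>* in place of L> *)
  (forall x a A B R G D,
     CLstar (RN a x :: R) (LW x (Cnd A B) :: G) (LEx a A :: D) ->
     CLstar (RN a x :: R) (LCnd x a A B :: LW x (Cnd A B) :: G) D ->
     CLstar (RN a x :: R) (LW x (Cnd A B) :: G) D).
Proof.
  split; [|split].
  - apply mon_all_admissible.
  - apply Lcnd_star_admissible.
  - apply Lcnd_admissible_star.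
Qed.
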